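(* Let $G$ be a group, let $\tau,\rho\in\mathrm{Aut}(G)$ and $\sigma\in\mathrm{End}(G)$ be such that $\rho\circ\tau=\tau\circ\rho$, $\rho\circ\sigma=\sigma\circ\rho$, and for all $y,z\in G$ \[\tau(\sigma(y))\,\sigma(z)=\tau(\sigma(\rho(z)))\,\sigma(\tau(y))\,\sigma(\sigma(z)).\] Define $B:G\times G\to G\times G$ by $B(x,y)=(\tau(y)\sigma(x),\,\rho(x))$. Then $(G,B)$ is a birack, with kink map given by $\pi(x)=\tau(\rho(x))\,\sigma(x)$.
   Context: Let $X$ be a set. A map $B:X\times X\to X\times X$, written $B=(B_1,B_2)$, is strongly invertible if: (i) $B$ is a bijection; (ii) there is a unique invertible map $S:X\times X\to X\times X$ (the sideways map) with $S(B_1(x,y),x)=(B_2(x,y),y)$ for all $x,y$; (iii) writing $S=(S_1,S_2)$, $S^{-1}=(S^{-1}_1,S^{-1}_2)$ and $\Delta(x)=(x,x)$, each of $S_1\circ\Delta$, $S_2\circ\Delta$, $S^{-1}_1\circ\Delta$, $S^{-1}_2\circ\Delta$ is a bijection $X\to X$. A birack is a pair $(X,B)$ with $B$ strongly invertible satisfying the set-theoretic Yang–Baxter equation $(B\times\mathrm{Id})(\mathrm{Id}\times B)(B\times\mathrm{Id})=(\mathrm{Id}\times B)(B\times\mathrm{Id})(\mathrm{Id}\times B)$. Its kink map is $\pi=S^{-1}_1\circ\Delta\circ(S^{-1}_2\circ\Delta)^{-1}$. Group multiplication in $G$ is written by juxtaposition. *)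

From HB Require Import structures.
From mathcomp Require Import all_boot.
Set Implicit Arguments. Unset Strict Implicit. Unset Printing Implicit Defensive.

Section Birack.
Variable X : Type.

Definition sideways (B S : X * X -> X * X) : Prop :=
  forall x y, S ((B (x, y)).1, x) = ((B (x, y)).2, y).

Definition strongly_invertible (B : X * X -> X * X) : Prop :=
  bijective B /\
  exists S Sinv : X * X -> X * X,
    [/\ cancel S Sinv, cancel Sinv S, sideways B S,
        (forall S', bijective S' -> sideways B S' -> S' =1 S) &
        [/\ bijective (fun x => (S (x, x)).1),
            bijective (fun x => (S (x, x)).2),
            bijective (fun x => (Sinv (x, x)).1) &
            bijective (fun x => (Sinv (x, x)).2)]].

Definition BxId (B : X * X -> X * X) (t : X * X * X) : X * X * X :=
  let: (x, y, z) := t in let: (a, b) := B (x, y) in (a, b, z).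
Definition IdxB (B : X * X -> X * X) (t : X * X * X) : X * X * X :=
  let: (x, y, z) := t in let: (a, b) := B (y, z) in (x, a, b).

Definition yang_baxter (B : X * X -> X * X) : Prop :=
  forall t, BxId B (IdxB B (BxId B t)) = IdxB B (BxId B (IdxB B t)).

Definition birack (B : X * X -> X * X) : Prop :=
  strongly_invertible B /\ yang_baxter B.

(* pi is the kink map pi = Sinv_1 o Delta o (Sinv_2 o Delta)^{-1}, where S is
   the (unique) invertible sideways map of B, Sinv its inverse, and g the
   inverse of Sinv_2 o Delta. *)
Definition is_kink_map (B : X * X -> X * X) (pi : X -> X) : Prop :=
  forall S Sinv : X * X -> X * X,
    cancel S Sinv -> cancel Sinv S -> sideways B S ->
  forall g : X -> X,
    cancel (fun x => (Sinv (x, x)).2) g -> cancel g (fun x => (Sinv (x, x)).2) ->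
  forall x, pi x = (Sinv (g x, g x)).1.

End Birack.

(* From the twist identity one reads off, with z = 1 and y = 1, that tau and
   sigma commute and that the kink map k x = tau (rho x) * sigma x fixes the
   image of sigma.  Hence sigma (k x) = sigma x, so the "defect"
   x |-> x / sigma x sends k x to tau (rho x); it follows that the defect and k
   are bijections.  The sideways map of B is S (a, x) = (rho x, tau^-1 (a / sigma x)),
   whose four diagonal restrictions are rho, tau^-1 o defect, k o rho^-1 and
   rho^-1, and the Yang-Baxter equation is the twist identity in disguise. *)
From HB Require Import structures.
From mathcomp Require Import all_boot.

Set Implicit Arguments.
Unset Strict Implicit.
Unset Printing Implicit Defensive.

Section SidewaysMaps.
Variables (X : Type) (B : X * X -> X * X).
Hypothesis B1_surj : forall a x, exists y, (B (x, y)).1 = a.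

Lemma sideways_eq S1 S2 : sideways B S1 -> sideways B S2 -> S1 =1 S2.
Proof. by move=> sw1 sw2 [a x]; have [y <-] := B1_surj a x; rewrite sw1 sw2. Qed.

Lemma strongly_invertible_of_sideways S Sinv :
  bijective B -> cancel S Sinv -> cancel Sinv S -> sideways B S ->
  bijective (fun x => (S (x, x)).1) -> bijective (fun x => (S (x, x)).2) ->
  bijective (fun x => (Sinv (x, x)).1) -> bijective (fun x => (Sinv (x, x)).2) ->
  strongly_invertible B.
Proof.
move=> ? ? ? ? ? ? ? ?; split=> //; exists S, Sinv.
by split=> // S' _ swS'; apply: sideways_eq.
Qed.

Lemma is_kink_map_of_sideways S0 Sinv0 (pi : X -> X) :
  sideways B S0 -> cancel S0 Sinv0 ->
  (forall x, pi (Sinv0 (x, x)).2 = (Sinv0 (x, x)).1) -> is_kink_map B pi.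
Proof.
move=> swS0 S0K piE S Sinv _ SinvK swS g _ gK x.
have SinvE p : Sinv p = Sinv0 p.
  by rewrite -[LHS]S0K (sideways_eq swS0 swS) SinvK.
by rewrite -[in LHS](gK x) !SinvE piE.
Qed.

End SidewaysMaps.

Local Open Scope group_scope.

Section GroupMorphism.
Variables (G : groupType) (f : G -> G).
Hypothesis fM : {morph f : x y / x * y}.

Lemma morph_gmul1 : f 1 = 1.
Proof. by apply: (@mulgI _ (f 1)); rewrite -fM !mulg1. Qed.

Lemma morph_gmulV x : f x^-1 = (f x)^-1.
Proof. by apply/esym/mulg1_eq; rewrite -fM mulgV morph_gmul1. Qed.

End GroupMorphism.

Section TwistedBirack.
Variables (G : groupType) (tau taui rho rhoi sigma : G -> G).
Hypotheses (tauM : {morph tau : x y / x * y}) (rhoM : {morph rho : x y / x * y})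
           (sigmaM : {morph sigma : x y / x * y}).
Hypotheses (tauK : cancel tau taui) (tauiK : cancel taui tau)
           (rhoK : cancel rho rhoi) (rhoiK : cancel rhoi rho).
Hypotheses (rho_tau : forall x, rho (tau x) = tau (rho x))
           (rho_sigma : forall x, rho (sigma x) = sigma (rho x)).
Hypothesis twist : forall y z,
  tau (sigma y) * sigma z = tau (sigma (rho z)) * sigma (tau y) * sigma (sigma z).

Definition kink x := tau (rho x) * sigma x.
Definition defect x := x / sigma x.
Definition undefect v := v * rhoi (taui (sigma v)).

Lemma tau_sigma x : tau (sigma x) = sigma (tau x).
Proof.
have := twist x 1.
by rewrite !(morph_gmul1 rhoM, morph_gmul1 sigmaM, morph_gmul1 tauM) !mulg1 mul1g.
Qed.

Lemma kink_sigma x : kink (sigma x) = sigma x.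
Proof.
have := twist 1 x.
by rewrite !(morph_gmul1 sigmaM, morph_gmul1 tauM) mul1g mulg1 -rho_sigma /kink => <-.
Qed.

Lemma sigma_kink x : sigma (kink x) = sigma x.
Proof. by rewrite /kink sigmaM -tau_sigma -rho_sigma; apply: kink_sigma. Qed.

Lemma defect_kink x : defect (kink x) = tau (rho x).
Proof. by rewrite /defect sigma_kink mulgK. Qed.

Lemma defectK : cancel defect undefect.
Proof.
move=> x; rewrite /undefect sigmaM (morph_gmulV sigmaM).
by rewrite -[X in X / _]kink_sigma /kink mulgK tauK rhoK mulgVK.
Qed.

Lemma kinkE x : kink x = undefect (tau (rho x)).
Proof. by rewrite -defect_kink defectK. Qed.

Lemma undefectK : cancel undefect defect.
Proof.
move=> v; have vE : v = tau (rho (rhoi (taui v))) by rewrite rhoiK tauiK.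
by rewrite [in undefect v]vE -kinkE defect_kink -vE.
Qed.

Lemma defect_bij : bijective defect.
Proof. exact: Bijective defectK undefectK. Qed.

Lemma kink_bij : bijective kink.
Proof.
exists (fun x => rhoi (taui (defect x))) => x; first by rewrite defect_kink tauK rhoK.
by rewrite kinkE rhoiK tauiK defectK.
Qed.

Definition birack_map (p : G * G) := (tau p.2 * sigma p.1, rho p.1).
Definition sideways_map (p : G * G) := (rho p.2, taui (p.1 / sigma p.2)).
Definition sideways_inv (p : G * G) := (tau p.2 * sigma (rhoi p.1), rhoi p.1).

Lemma birack_map_bij : bijective birack_map.
Proof.
exists (fun p => (rhoi p.2, taui (p.1 / sigma (rhoi p.2)))) => [[x y]|[a b]];
  rewrite /birack_map /=; first by rewrite rhoK mulgK tauK.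
by rewrite tauiK mulgVK rhoiK.
Qed.

Lemma sideways_birack_map : sideways birack_map sideways_map.
Proof. by move=> x y; rewrite /sideways_map /= mulgK tauK. Qed.

Lemma sideways_mapK : cancel sideways_map sideways_inv.
Proof. by move=> [a x]; rewrite /sideways_inv /= rhoK tauiK mulgVK. Qed.

Lemma sideways_invK : cancel sideways_inv sideways_map.
Proof. by move=> [u y]; rewrite /sideways_map /= rhoiK mulgK tauK. Qed.

Lemma birack_map_fst_surj a x : exists y, (birack_map (x, y)).1 = a.
Proof. by exists (taui (a / sigma x)); rewrite /= tauiK mulgVK. Qed.

Lemma strongly_invertible_birack_map : strongly_invertible birack_map.
Proof.
have taui_bij : bijective taui by exists tau.
have rhoi_bij : bijective rhoi by exists rho.
apply: (strongly_invertible_of_sideways birack_map_fst_surj birack_map_bij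
          sideways_mapK sideways_invK sideways_birack_map) => /=.
- by exists rhoi.
- exact: (bij_comp taui_bij defect_bij).
- apply: (eq_bij (bij_comp kink_bij rhoi_bij)) => x /=.
  by rewrite /kink rhoiK.
- exact: rhoi_bij.
Qed.

Lemma yang_baxter_birack_map : yang_baxter birack_map.
Proof.
move=> [[x y] z]; rewrite /BxId /IdxB /birack_map /=; congr (_, _, _).
- by rewrite !tauM !sigmaM -!mulgA; congr (_ * _); rewrite !mulgA -twist.
- by rewrite rhoM rho_tau rho_sigma.
Qed.

Lemma is_kink_map_birack_map : is_kink_map birack_map kink.
Proof.
apply: (is_kink_map_of_sideways birack_map_fst_surj sideways_birack_map
         sideways_mapK) => x.
by rewrite /kink /= rhoiK.
Qed.

End TwistedBirack.

Theorem mainTheorem6 (G : groupType) (tau rho sigma : G -> G)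
  (tau_morph : {morph tau : x y / x * y})
  (rho_morph : {morph rho : x y / x * y})
  (sigma_morph : {morph sigma : x y / x * y})
  (tau_bij : bijective tau) (rho_bij : bijective rho)
  (rho_tau : forall x, rho (tau x) = tau (rho x))
  (rho_sigma : forall x, rho (sigma x) = sigma (rho x))
  (H : forall y z : G,
      tau (sigma y) * sigma z
      = tau (sigma (rho z)) * sigma (tau y) * sigma (sigma z)) :
  let B := fun p : G * G => (tau p.2 * sigma p.1, rho p.1) in
  birack B /\ is_kink_map B (fun x => tau (rho x) * sigma x).
Proof.
move=> B; case: tau_bij => taui tauK tauiK; case: rho_bij => rhoi rhoK rhoiK.
split; first split.
- exact: strongly_invertible_birack_map tau_morph rho_morph sigma_morph
    tauK tauiK rhoK rhoiK rho_sigma H.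
- exact: yang_baxter_birack_map tau_morph rho_morph sigma_morph rho_tau rho_sigma H.
- exact: is_kink_map_birack_map tauK tauiK rhoK rhoiK.
Qed.
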